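(* Let $n\in\omega$ and for each $u\in2^n$ let $X_u\subseteq\mathcal D$ be a nonempty $\mathrm{OD}$ set. Assume that for every neighbouring pair $u,v\in2^n$ an $\mathrm{OD}$ set $R_{uv}\subseteq\mathcal D^2$ is given such that $X_u\,R_{uv}\,X_v$. (1) If $u_0\in2^n$ and $X'\subseteq X_{u_0}$ is a nonempty $\mathrm{OD}$ set, then there is a system of nonempty $\mathrm{OD}$ sets $Y_u\subseteq X_u$ ($u\in2^n$) such that $Y_u\,R_{uv}\,Y_v$ for all neighbouring pairs $u,v$, and $Y_{u_0}=X'$. (2) If $u_0,v_0\in2^n$ is a neighbouring pair and nonempty $\mathrm{OD}$ sets $X'\subseteq X_{u_0}$, $X''\subseteq X_{v_0}$ satisfy $X'\,R_{u_0v_0}\,X''$, then there is a system of nonempty $\mathrm{OD}$ sets $Y_u\subseteq X_u$ ($u\in2^n$) such that $Y_u\,R_{uv}\,Y_v$ for all neighbouring pairs $u,v$, and $Y_{u_0}=X'$, $Y_{v_0}=X''$.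
   Context: $\mathcal D=2^\omega$. For $u,v\in2^n$, the ordered pair $\langle u,v\rangle$ is a neighbouring pair iff $u=0^k{}^\frown0^\frown r$ and $v=0^k{}^\frown1^\frown r$ for some $k<n$ and some $r\in2^{n-k-1}$, where $0^k$ is the sequence of $k$ zeros. For sets $X,Y$ and a binary relation $R$, $X\,R\,Y$ means: $\forall x\in X\,\exists y\in Y\,(x\,R\,y)$ and $\forall y\in Y\,\exists x\in X\,(x\,R\,y)$. *)

From mathcomp Require Import all_boot.
Set Implicit Arguments. Unset Strict Implicit. Unset Printing Implicit Defensive.

(* The Cantor space D = 2^omega. Subsets of D are predicates D -> Prop,
   subsets of D^2 are binary predicates D -> D -> Prop. *)
Definition D := nat -> bool.

Definition zeros (k : nat) : seq bool := nseq k false.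

(* <u,v> is a neighbouring pair of elements of 2^n:
   u = 0^k ^ 0 ^ r  and  v = 0^k ^ 1 ^ r  (k < n forced by lengths). *)
Definition neighbour (n : nat) (u v : n.-tuple bool) : Prop :=
  exists (k : nat) (r : seq bool),
    val u = zeros k ++ false :: r /\ val v = zeros k ++ true :: r.

Definition nonempty (A : D -> Prop) : Prop := exists x, A x.
Definition includedD (A B : D -> Prop) : Prop := forall x, A x -> B x.

Definition relcover (X : D -> Prop) (R : D -> D -> Prop) (Y : D -> Prop) : Prop :=
  (forall x, X x -> exists y, Y y /\ R x y) /\
  (forall y, Y y -> exists x, X x /\ R x y).

(* Abstraction of ordinal definability:
   ODs / ODr are the classes of OD subsets of D and of D^2.  We only assume
   closure properties that the genuine class OD satisfies: closure under
   binary intersection and under taking images / preimages of an OD set by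
   an OD relation. *)
Definition od_closed (ODs : (D -> Prop) -> Prop) (ODr : (D -> D -> Prop) -> Prop)
  : Prop :=
  (forall A B, ODs A -> ODs B -> ODs (fun x => A x /\ B x)) /\
  (forall A R, ODs A -> ODr R -> ODs (fun y => exists x, A x /\ R x y)) /\
  (forall A R, ODs A -> ODr R -> ODs (fun x => exists y, A y /\ R x y)).

From mathcomp Require Import all_boot.
Set Implicit Arguments. Unset Strict Implicit. Unset Printing Implicit Defensive.

(* Splitting off the first bit, the neighbour graph on 2^(n+1) is a copy of
   the graph on 2^n (the words 0r) with one leaf 1r hung on each 0r.  So both
   claims follow by induction on n: solve the problem on the copy of 2^n and
   let each leaf be the R-image of the set chosen at 0r.  A prescribed set at
   a leaf 1r is handled by first shrinking X_{0r} to its R-preimage; a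
   prescribed edge 0r -- 1r by prescribing the vertex 0r to the induction. *)

Section Refinement.
Variables (ODs : (D -> Prop) -> Prop) (ODr : (D -> D -> Prop) -> Prop).
Hypothesis HOD : od_closed ODs ODr.

Definition refines (A B : D -> Prop) : Prop :=
  ODs A /\ nonempty A /\ includedD A B.

Definition rel_image (S : D -> D -> Prop) (A B : D -> Prop) : D -> Prop :=
  fun y => B y /\ exists x, A x /\ S x y.

Definition rel_preimage (S : D -> D -> Prop) (A B : D -> Prop) : D -> Prop :=
  fun x => A x /\ exists y, B y /\ S x y.

Lemma relcover_image A B A' S : ODs B -> ODr S -> relcover A S B ->
  refines A' A -> refines (rel_image S A' B) B /\ relcover A' S (rel_image S A' B).
Proof.
move=> ODB ODS [AB _] [ODA' [[x0 A'x0] A'A]]; case: HOD => ODI [ODimg _].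
split; first split; last split.
- exact: ODI ODB (ODimg _ _ ODA' ODS).
- split; last by move=> y [].
  have [y [By Sx0y]] := AB x0 (A'A x0 A'x0).
  by exists y; split=> //; exists x0.
- move=> x A'x; have [y [By Sxy]] := AB x (A'A x A'x).
  by exists y; do !split=> //; exists x.
- by move=> y [_ [x A'xSxy]]; exists x.
Qed.

Lemma relcover_preimage A B B' S : ODs A -> ODr S -> relcover A S B ->
  refines B' B -> refines (rel_preimage S A B') A /\ relcover (rel_preimage S A B') S B'.
Proof.
move=> ODA ODS [_ BA] [ODB' [[y0 B'y0] B'B]]; case: HOD => ODI [_ ODpre].
split; first split; last split.
- exact: ODI ODA (ODpre _ _ ODB' ODS).
- split; last by move=> x [].
  have [x [Ax Sxy0]] := BA y0 (B'B y0 B'y0).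
  by exists x; split=> //; exists y0.
- by move=> x [_ [y B'ySxy]]; exists y.
- move=> y B'y; have [x [Ax Sxy]] := BA y (B'B y B'y).
  by exists x; do !split=> //; exists y.
Qed.

Definition admissible n (X : n.-tuple bool -> D -> Prop)
    (R : n.-tuple bool -> n.-tuple bool -> D -> D -> Prop) : Prop :=
  (forall u, ODs (X u) /\ nonempty (X u)) /\
  (forall u v, neighbour u v -> ODr (R u v) /\ relcover (X u) (R u v) (X v)).

Definition coherent n (X : n.-tuple bool -> D -> Prop)
    (R : n.-tuple bool -> n.-tuple bool -> D -> D -> Prop)
    (Y : n.-tuple bool -> D -> Prop) : Prop :=
  (forall u, refines (Y u) (X u)) /\
  (forall u v, neighbour u v -> relcover (Y u) (R u v) (Y v)).

Lemma neighbour_tuple0 (u v : 0.-tuple bool) : ~ neighbour u v.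
Proof.
case=> k [r [Eu _]]; have := congr1 size Eu.
by rewrite size_tuple size_cat /= addnS.
Qed.

Lemma neighbour_cons n b c (r s : n.-tuple bool) :
  neighbour [tuple of b :: r] [tuple of c :: s] <->
  [/\ b = false, c = true & r = s] \/ [/\ b = false, c = false & neighbour r s].
Proof.
split.
- case=> [[|k] [t [/= [-> Er] [-> Es]]]].
    by left; split=> //; apply: val_inj; rewrite /= Er Es.
  by right; split=> //; exists k, t.
- case=> [[-> -> ->] | [-> -> [k [t [Er Es]]]]]; first by exists 0, s.
  by exists k.+1, t; rewrite /= Er Es.
Qed.

Lemma neighbour_leaf n (r : n.-tuple bool) :
  neighbour [tuple of false :: r] [tuple of true :: r].
Proof. by exists 0, r. Qed.

Section Halves.
Variable n : nat.
Implicit Types (X : n.+1.-tuple bool -> D -> Prop)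
  (R : n.+1.-tuple bool -> n.+1.-tuple bool -> D -> D -> Prop)
  (r : n.-tuple bool).

Definition half0 X r : D -> Prop := X [tuple of false :: r].

Definition half0_rel R (r s : n.-tuple bool) : D -> D -> Prop :=
  R [tuple of false :: r] [tuple of false :: s].

Definition leaf_rel R r : D -> D -> Prop :=
  R [tuple of false :: r] [tuple of true :: r].

Definition glue (Y0 Y1 : n.-tuple bool -> D -> Prop) (t : n.+1.-tuple bool)
    : D -> Prop :=
  if thead t then Y1 (behead_tuple t) else Y0 (behead_tuple t).

Lemma glue_cons (Y0 Y1 : n.-tuple bool -> D -> Prop) b r :
  glue Y0 Y1 [tuple of b :: r] = if b then Y1 r else Y0 r.
Proof.
rewrite /glue theadE.
by have -> : behead_tuple [tuple of b :: r] = r by apply: val_inj.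
Qed.

Lemma admissible_half0 X R :
  admissible X R -> admissible (half0 X) (half0_rel R).
Proof.
case=> adX adR; split=> [r | r s rs]; first exact: adX.
by apply: adR; apply/neighbour_cons; right.
Qed.

Lemma admissible_leaf X R r : admissible X R ->
  ODr (leaf_rel R r) /\
  relcover (X [tuple of false :: r]) (leaf_rel R r) (X [tuple of true :: r]).
Proof. by case=> _ adR; apply/adR/neighbour_leaf. Qed.

Lemma coherent_glue X R (Y0 Y1 : n.-tuple bool -> D -> Prop) :
  coherent (half0 X) (half0_rel R) Y0 ->
  (forall r, refines (Y1 r) (X [tuple of true :: r]) /\
             relcover (Y0 r) (leaf_rel R r) (Y1 r)) ->
  coherent X R (glue Y0 Y1).
Proof.
move=> [Y0X Y0R] Y1ok; split.
  by case/tupleP=> [[|] r]; rewrite glue_cons; [case: (Y1ok r) | apply: Y0X].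
case/tupleP=> b r; case/tupleP=> c s.
case/neighbour_cons=> [[-> -> <-] | [-> -> rs]]; rewrite !glue_cons.
  by case: (Y1ok r).
exact: Y0R.
Qed.

Definition default_leaf X R (Y0 : n.-tuple bool -> D -> Prop) r
    : D -> Prop :=
  rel_image (leaf_rel R r) (Y0 r) (X [tuple of true :: r]).

Lemma default_leaf_ok X R (Y0 : n.-tuple bool -> D -> Prop) r :
  admissible X R -> coherent (half0 X) (half0_rel R) Y0 ->
  refines (default_leaf X R Y0 r) (X [tuple of true :: r]) /\
  relcover (Y0 r) (leaf_rel R r) (default_leaf X R Y0 r).
Proof.
move=> adm [Y0X _]; have [ODR XRX] := admissible_leaf r adm.
exact: relcover_image (proj1 (proj1 adm _)) ODR XRX (Y0X r).
Qed.

Lemma coherent_extend X R (Y0 : n.-tuple bool -> D -> Prop) :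
  admissible X R -> coherent (half0 X) (half0_rel R) Y0 ->
  exists Y, coherent X R Y /\ forall r, Y [tuple of false :: r] = Y0 r.
Proof.
move=> adm coh0; exists (glue Y0 (default_leaf X R Y0)); split.
  by apply: coherent_glue => // r; apply: default_leaf_ok.
by move=> r; rewrite glue_cons.
Qed.

Lemma coherent_extend_at X R (Y0 : n.-tuple bool -> D -> Prop) r0 Z :
  admissible X R -> coherent (half0 X) (half0_rel R) Y0 ->
  refines Z (X [tuple of true :: r0]) -> relcover (Y0 r0) (leaf_rel R r0) Z ->
  exists Y, coherent X R Y /\ Y [tuple of false :: r0] = Y0 r0 /\
            Y [tuple of true :: r0] = Z.
Proof.
move=> adm coh0 ZX Y0RZ.
exists (glue Y0 (fun r => if r == r0 then Z else default_leaf X R Y0 r)).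
split; last by rewrite !glue_cons eqxx.
apply: coherent_glue => // r; case: eqP => [-> // | _].
exact: default_leaf_ok.
Qed.

End Halves.

Lemma coherent_through_vertex n (X : n.-tuple bool -> D -> Prop) R u0 X' :
  admissible X R -> refines X' (X u0) ->
  exists Y, coherent X R Y /\ Y u0 = X'.
Proof.
elim: n X R u0 X' => [|n IH] X R u0 X' adm X'X.
  exists (fun=> X'); split=> //; split=> [u | u v /neighbour_tuple0 //].
  by rewrite (tuple0 u) -(tuple0 u0).
have adm0 := admissible_half0 adm.
case/tupleP: u0 X'X => [[|] r0] X'X.
- have [ODR XRX] := proj2 adm _ _ (proj2 (neighbour_cons _ _ _ _)
    (or_introl (And3 erefl erefl (erefl r0)))).
  have [ZX ZRX'] := relcover_preimage (proj1 (proj1 adm _)) ODR XRX X'X.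
  have [Y0 [coh0 Y0Z]] := IH _ _ r0 _ adm0 ZX.
  rewrite -Y0Z in ZRX'.
  by have [Y [coh [_ YX']]] := coherent_extend_at adm coh0 X'X ZRX'; exists Y.
- have [Y0 [coh0 Y0X']] := IH _ _ r0 _ adm0 X'X.
  by have [Y [coh YY0]] := coherent_extend adm coh0; exists Y; rewrite YY0.
Qed.

Lemma coherent_through_edge n (X : n.-tuple bool -> D -> Prop) R u0 v0 X' X'' :
  admissible X R -> neighbour u0 v0 ->
  refines X' (X u0) -> refines X'' (X v0) -> relcover X' (R u0 v0) X'' ->
  exists Y, coherent X R Y /\ Y u0 = X' /\ Y v0 = X''.
Proof.
elim: n X R u0 v0 X' X'' => [|n IH] X R u0 v0 X' X'' adm uv.
  by case: (neighbour_tuple0 uv).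
have adm0 := admissible_half0 adm.
move: uv; case/tupleP: u0 => b r; case/tupleP: v0 => c s.
case/neighbour_cons=> [[-> -> <-] | [-> -> rs]] X'X X''X X'RX''.
- have [Y0 [coh0 Y0X']] := coherent_through_vertex adm0 X'X.
  rewrite -Y0X' in X'RX''.
  have [Y [coh [YY0 YX'']]] := coherent_extend_at adm coh0 X''X X'RX''.
  by exists Y; rewrite YY0 Y0X'.
- have [Y0 [coh0 [Y0X' Y0X'']]] := IH _ _ r s _ _ adm0 rs X'X X''X X'RX''.
  by have [Y [coh YY0]] := coherent_extend adm coh0; exists Y; rewrite !YY0.
Qed.

End Refinement.

Theorem lemma4p3
  (ODs : (D -> Prop) -> Prop) (ODr : (D -> D -> Prop) -> Prop)
  (HOD : od_closed ODs ODr)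
  (n : nat) (X : n.-tuple bool -> D -> Prop)
  (R : n.-tuple bool -> n.-tuple bool -> D -> D -> Prop)
  (HX : forall u, ODs (X u) /\ nonempty (X u))
  (HR : forall u v, neighbour u v -> ODr (R u v) /\ relcover (X u) (R u v) (X v)) :
  (forall (u0 : n.-tuple bool) (X' : D -> Prop),
      ODs X' -> nonempty X' -> includedD X' (X u0) ->
      exists Y : n.-tuple bool -> D -> Prop,
        (forall u, ODs (Y u) /\ nonempty (Y u) /\ includedD (Y u) (X u)) /\
        (forall u v, neighbour u v -> relcover (Y u) (R u v) (Y v)) /\
        Y u0 = X') /\
  (forall (u0 v0 : n.-tuple bool) (X' X'' : D -> Prop),
      neighbour u0 v0 ->
      ODs X' -> nonempty X' -> includedD X' (X u0) ->
      ODs X'' -> nonempty X'' -> includedD X'' (X v0) ->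
      relcover X' (R u0 v0) X'' ->
      exists Y : n.-tuple bool -> D -> Prop,
        (forall u, ODs (Y u) /\ nonempty (Y u) /\ includedD (Y u) (X u)) /\
        (forall u v, neighbour u v -> relcover (Y u) (R u v) (Y v)) /\
        Y u0 = X' /\ Y v0 = X'').
Proof.
have adm : admissible ODs ODr X R by split.
split.
  move=> u0 X' ODX' X'ne X'X.
  have X'ref : refines ODs X' (X u0) by split.
  have [Y [[YX YR] YX']] := coherent_through_vertex HOD adm X'ref.
  by exists Y.
move=> u0 v0 X' X'' uv ODX' X'ne X'X ODX'' X''ne X''X X'RX''.
have X'ref : refines ODs X' (X u0) by split.
have X''ref : refines ODs X'' (X v0) by split.
have [Y [[YX YR] Yuv]] := coherent_through_edge HOD adm uv X'ref X''ref X'RX''.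
by exists Y.
Qed.
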